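(* If $D\subseteq\mathcal M^d$ is an nc-domain, then its envelope $D^\sim$ is an nc-domain.
   Context: $\mathcal M^d=\bigcup_n\mathcal M_n^d$. An nc-set is a subset of $\mathcal M^d$ closed under direct sums and unitary conjugation; an nc-domain is an nc-set $D$ with $D\cap\mathcal M_n^d$ open in $\mathcal M_n^d$ for each $n$. A set $B$ is invariant if $S^{-1}(B\cap\mathcal M_n^d)S\subseteq B$ for all $n$ and invertible $S\in\mathcal M_n$. The envelope $D^\sim$ is the smallest invariant nc-set containing $D$. *)

From HB Require Import structures.
From mathcomp Require Import all_boot all_order all_algebra.
From mathcomp Require Import complex.
From mathcomp Require Import reals.
Set Implicit Arguments. Unset Strict Implicit. Unset Printing Implicit Defensive.
Import Order.TTheory GRing.Theory Num.Theory.
Local Open Scope ring_scope.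

(* A point of M^d = \bigcup_n M_n^d : a size n together with a d-tuple of
   n x n complex matrices. *)
Definition ncpt (R : realType) (d : nat) : Type :=
  {n : nat & 'I_d -> 'M[R[i]]_n}.

Definition ncpred (R : realType) (d : nat) := ncpt R d -> Prop.

Definition ncdsum (R : realType) (d n m : nat)
  (X : 'I_d -> 'M[R[i]]_n) (Y : 'I_d -> 'M[R[i]]_m) : 'I_d -> 'M[R[i]]_(n + m) :=
  fun k => block_mx (X k) 0 0 (Y k).

Definition adjmx (R : realType) (n : nat) (U : 'M[R[i]]_n) : 'M[R[i]]_n :=
  (map_mx Num.conj U)^T.

Definition unitary (R : realType) (n : nat) (U : 'M[R[i]]_n) : Prop :=
  adjmx U *m U = 1%:M /\ U *m adjmx U = 1%:M.

Definition ncsim (R : realType) (d n : nat) (S : 'M[R[i]]_n)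
  (X : 'I_d -> 'M[R[i]]_n) : 'I_d -> 'M[R[i]]_n :=
  fun k => invmx S *m X k *m S.

Definition ncset (R : realType) (d : nat) (D : ncpred R d) : Prop :=
  (forall n m (X : 'I_d -> 'M[R[i]]_n) (Y : 'I_d -> 'M[R[i]]_m),
      D (existT _ n X) -> D (existT _ m Y) ->
      D (existT _ (n + m)%N (ncdsum X Y))) /\
  (forall n (X : 'I_d -> 'M[R[i]]_n) (U : 'M[R[i]]_n),
      unitary U -> D (existT _ n X) ->
      D (existT _ n (fun k => adjmx U *m X k *m U))).

(* D \cap M_n^d is open in M_n^d = (C^{n x n})^d, with its usual (Euclidean)
   topology, here described by the equivalent entrywise max-norm balls. *)
Definition level_open (R : realType) (d : nat) (D : ncpred R d) (n : nat) : Prop :=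
  forall X : 'I_d -> 'M[R[i]]_n, D (existT _ n X) ->
    exists eps : R, 0 < eps /\
      forall Y : 'I_d -> 'M[R[i]]_n,
        (forall k i j, `|Y k i j - X k i j| < (eps%:C)%C) -> D (existT _ n Y).

Definition ncdomain (R : realType) (d : nat) (D : ncpred R d) : Prop :=
  ncset D /\ forall n, level_open D n.

Definition invariant (R : realType) (d : nat) (B : ncpred R d) : Prop :=
  forall n (X : 'I_d -> 'M[R[i]]_n) (S : 'M[R[i]]_n),
    S \in unitmx -> B (existT _ n X) -> B (existT _ n (ncsim S X)).

Definition envelope (R : realType) (d : nat) (D : ncpred R d) : ncpred R d :=
  fun P => forall B : ncpred R d,
    ncset B -> invariant B -> (forall Q, D Q -> B Q) -> B P.

(** A point of [D^~] is similar to a point of [D]: the similarity orbit of [D]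
   is already an invariant nc-set containing [D], so it contains [D^~].  Given
   [Y = S^-1 X S] with [X] in [D], the map [Y' |-> S Y' S^-1] is continuous and
   sends [Y] to [X]; hence a small enough ball around [Y] is mapped into the
   ball around [X] contained in [D], and conjugating back by [S] shows that this
   ball around [Y] lies in [D^~]. *)
From Pilot Require Import Defs.
From mathcomp Require Import all_boot all_order all_algebra complex reals.
From Stdlib Require Import FunctionalExtensionality.
Set Implicit Arguments. Unset Strict Implicit. Unset Printing Implicit Defensive.
Import Order.TTheory GRing.Theory Num.Theory.
Local Open Scope ring_scope.

Definition mxnorm1 (F : numDomainType) m n (A : 'M[F]_(m, n)) : F :=
  \sum_i \sum_j `|A i j|.

Lemma mxnorm1_ge0 (F : numDomainType) m n (A : 'M[F]_(m, n)) : 0 <= mxnorm1 A.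
Proof. by apply: sumr_ge0 => i _; apply: sumr_ge0. Qed.

Lemma norm_mxentry_le (F : numDomainType) m n (A : 'M[F]_(m, n)) i j :
  `|A i j| <= mxnorm1 A.
Proof.
rewrite /mxnorm1 (bigD1 i) //= (bigD1 j) //= -addrA lerDl.
by apply: addr_ge0; apply: sumr_ge0 => *; last apply: sumr_ge0.
Qed.

Lemma norm_mulmx3_le (F : numDomainType) n (S Z T : 'M[F]_n) (M e : F) :
  (forall i j, `|S i j| <= M) -> (forall i j, `|T i j| <= M) ->
  (forall i j, `|Z i j| <= e) ->
  forall i j, `|(S *m Z *m T) i j| <= n%:R * (n%:R * (M * e)) * M.
Proof.
move=> hS hT hZ i j.
have M0 : 0 <= M by apply: le_trans (hS i j).
have e0 : 0 <= e by apply: le_trans (hZ i j).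
have hSZ b : `|(S *m Z) i b| <= n%:R * (M * e).
  rewrite mxE; apply: le_trans (ler_norm_sum _ _ _) _.
  apply: le_trans (ler_sum _ (G := fun _ => M * e) _) _.
    by move=> c _; rewrite normrM; apply: ler_pM.
  by rewrite sumr_const card_ord mulr_natl.
rewrite mxE; apply: le_trans (ler_norm_sum _ _ _) _.
apply: le_trans (ler_sum _ (G := fun _ => n%:R * (M * e) * M) _) _.
  by move=> b _; rewrite normrM; apply: ler_pM.
by rewrite sumr_const card_ord -[_ *+ n]mulr_natl !mulrA.
Qed.

Lemma mulmx3_continuous_at0 (R : realType) n (S T : 'M[R[i]]_n) (eps : R) :
  0 < eps -> exists2 delta : R, 0 < delta &
    forall Z : 'M_n, (forall i j, `|Z i j| < delta%:C%C) ->
      forall i j, `|(S *m Z *m T) i j| < eps%:C%C.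
Proof.
move=> eps0.
pose M := mxnorm1 S + mxnorm1 T.
have M0 : 0 <= M by rewrite addr_ge0 ?mxnorm1_ge0.
have hS i j : `|S i j| <= M by rewrite ler_wpDr ?mxnorm1_ge0 ?norm_mxentry_le.
have hT i j : `|T i j| <= M by rewrite ler_wpDl ?mxnorm1_ge0 ?norm_mxentry_le.
pose K := 1 + n%:R * (n%:R * M) * M.
have K0 : 0 < K by rewrite ltr_pwDl // !mulr_ge0.
have KE : K = (complex.Re K)%:C%C by rewrite RRe_real // gtr0_real.
have Kr0 : 0 < complex.Re K by rewrite -ltcR -KE.
exists (eps / complex.Re K); first exact: divr_gt0.
move=> Z hZ i j; set e := (eps / complex.Re K)%:C%C.
have e0 : 0 < e by rewrite ltcR divr_gt0.
apply: le_lt_trans (norm_mulmx3_le hS hT (fun a b => ltW (hZ a b)) i j) _.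
have -> : eps%:C%C = K * e.
  by rewrite [in RHS]KE -rmorphM mulrCA mulfV ?mulr1 // gt_eqF.
have -> : n%:R * (n%:R * (M * e)) * M = n%:R * (n%:R * M) * M * e.
  by rewrite !mulrA mulrAC.
by rewrite mulrDl mul1r ltrDr.
Qed.

Section Envelope.
Variables (R : realType) (d : nat).
Implicit Types (D : ncpred R d) (n : nat).

(** [T] plays the role of [S^-1]; carrying it explicitly avoids computing
   inverses of block matrices in the direct-sum case. *)
Definition simorbit D : ncpred R d :=
  fun P => let: existT n Y := P in
    exists (X : 'I_d -> 'M[R[i]]_n) (S T : 'M[R[i]]_n),
      [/\ D (existT _ n X), S *m T = 1%:M, T *m S = 1%:M &
          Y = fun k => T *m X k *m S].

Lemma sub_simorbit D P : D P -> simorbit D P.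
Proof.
case: P => n X DX; exists X, 1%:M, 1%:M; split; rewrite ?mulmx1 //.
by apply: functional_extensionality => k; rewrite mul1mx mulmx1.
Qed.

Lemma simorbit_ncset D : ncset D -> ncset (simorbit D).
Proof.
case=> Dsum Dunit; split.
- move=> n m _ _ [X [S1 [T1 [DX ST1 TS1 ->]]]] [Y [S2 [T2 [DY ST2 TS2 ->]]]].
  exists (ncdsum X Y), (block_mx S1 0 0 S2), (block_mx T1 0 0 T2).
  rewrite !mulmx_block !mulmx0 !mul0mx !addr0 !add0r ST1 ST2 TS1 TS2.
  split; rewrite ?scalar_mx_block //; first exact: Dsum.
  apply: functional_extensionality => k.
  by rewrite /ncdsum !mulmx_block !(mulmx0, mul0mx, addr0, add0r).
- move=> n _ U [UU1 UU2] [X [S [T [DX ST TS ->]]]].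
  exists X, (S *m U), (adjmx U *m T); split => //.
  + by rewrite mulmxA -(mulmxA S) UU2 mulmx1.
  + by rewrite mulmxA -(mulmxA _ T) TS mulmx1.
  + by apply: functional_extensionality => k; rewrite !mulmxA.
Qed.

Lemma simorbit_invariant D : Defs.invariant (simorbit D).
Proof.
move=> n _ S0 S0unit [X [S [T [DX ST TS ->]]]].
exists X, (S *m S0), (invmx S0 *m T); split => //.
- by rewrite mulmxA -(mulmxA S) (mulmxV S0unit) mulmx1.
- by rewrite mulmxA -(mulmxA _ T) TS mulmx1 (mulVmx S0unit).
- by apply: functional_extensionality => k; rewrite /ncsim !mulmxA.
Qed.

Lemma envelope_ncset D : ncset (envelope D).
Proof.
split=> [n m X Y DX DY | n X U U_unitary DX] B Bset Binv DB.
- exact: Bset.1 (DX B Bset Binv DB) (DY B Bset Binv DB).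
- exact: Bset.2 _ _ _ U_unitary (DX B Bset Binv DB).
Qed.

Lemma envelope_invariant D : Defs.invariant (envelope D).
Proof. by move=> n X S Sunit DX B Bset Binv DB; apply: Binv (DX B Bset Binv DB). Qed.

Lemma sub_envelope D P : D P -> envelope D P.
Proof. by move=> DP B _ _; apply. Qed.

Lemma envelope_sub_simorbit D P : ncset D -> envelope D P -> simorbit D P.
Proof.
move=> Dset DP.
exact: DP _ (simorbit_ncset Dset) (@simorbit_invariant D) (@sub_simorbit D).
Qed.

Lemma envelope_level_open D n : ncset D -> level_open D n -> level_open (envelope D) n.
Proof.
move=> Dset Dopen _ /(envelope_sub_simorbit Dset) [X [S [T [DX ST TS ->]]]].
have [eps [eps0 ballD]] := Dopen X DX.
have [delta delta0 Hdelta] := mulmx3_continuous_at0 S T eps0.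
exists delta; split=> // Y HY.
pose X' k := S *m Y k *m T.
have DX' : D (existT _ n X').
  apply: ballD => k i j.
  have -> : X' k i j - X k i j = (S *m (Y k - T *m X k *m S) *m T) i j.
    rewrite mulmxBr mulmxBl !mulmxA ST mul1mx -!mulmxA ST mulmx1.
    by rewrite /X' -mulmxA !mxE.
  by apply: Hdelta => a b; have := HY k a b; rewrite !mxE.
have Sunit : S \in unitmx := (mulmx1_unit ST).1.
have invS : invmx S = T by rewrite -[T]mul1mx -(mulVmx Sunit) -mulmxA ST mulmx1.
have := envelope_invariant Sunit (sub_envelope DX').
congr (envelope D (existT _ n _)); apply: functional_extensionality => k.
by rewrite /ncsim /X' invS !mulmxA TS mul1mx -mulmxA TS mulmx1.
Qed.

End Envelope.

Theorem proposition3p6 (R : realType) (d : nat) (D : ncpred R d) :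
  ncdomain D -> ncdomain (envelope D).
Proof.
case=> Dset Dopen; split; first exact: envelope_ncset.
by move=> n; apply: envelope_level_open.
Qed.
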